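(* For any positive integer $n$ there exists an $n$-vertex graph which is $(2^{r+8}\log n,\, r)$-locally Ramsey for all $r$.
   Context: All logarithms are base $2$. For a graph $G$ and reals $m,r>0$ (not necessarily integers), $G$ is called $(m,r)$-locally Ramsey if every set of at least $m$ vertices of $G$ contains both a clique and an independent set of size at least $r$. *)

From HB Require Import structures.
From mathcomp Require Import all_boot all_order all_algebra.
From mathcomp Require Import reals exp.
Set Implicit Arguments. Unset Strict Implicit. Unset Printing Implicit Defensive.
Import Order.TTheory GRing.Theory Num.Theory.
Local Open Scope ring_scope.

Definition simple_graph (T : finType) (e : rel T) : Prop :=
  irreflexive e /\ symmetric e.

Definition is_clique (T : finType) (e : rel T) (S : {set T}) : Prop :=
  forall x y, x \in S -> y \in S -> x != y -> e x y.

Definition is_independent (T : finType) (e : rel T) (S : {set T}) : Prop :=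
  forall x y, x \in S -> y \in S -> ~~ e x y.

Definition log2 (R : realType) (x : R) : R := ln x / ln 2.

Definition locally_ramsey (R : realType) (T : finType) (e : rel T) (m r : R) : Prop :=
  forall A : {set T}, m <= (#|A|)%:R ->
    (exists2 C : {set T}, C \subset A & is_clique e C /\ r <= (#|C|)%:R) /\
    (exists2 I : {set T}, I \subset A & is_independent e I /\ r <= (#|I|)%:R).

From HB Require Import structures.
From mathcomp Require Import all_boot all_order all_algebra.
From mathcomp Require Import reals exp sequences.
From mathcomp Require Import ring lra zify.
Import Order.TTheory GRing.Theory Num.Theory.
Set Implicit Arguments. Unset Strict Implicit. Unset Printing Implicit Defensive.

(* Let s_j = floor ((256 * 2^j - 192 * (3/2)^j) * ln n), so that s_j <= 2^(j+8) log n.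
   Call a graph good if for every j < n every set U of s_(j+1) vertices contains,
   both in the graph and in its complement, a vertex with at least s_j neighbours
   in U.  In a good graph, picking such a vertex and recursing into its
   neighbourhood shows that every set of s_t vertices contains a clique and an
   independent set of size t + 1 > r, for t = floor r.
   Good graphs exist by counting: if all degrees inside U are below s_j, then U
   spans at most |U| (s_j - 1) / 2 of its |U| (|U| - 1) / 2 pairs, which by a
   Chernoff bound happens for at most a fraction n^(-2|U|) of all graphs.  Summing
   over the n^|U| sets U, the two colours and the n levels leaves a fraction at most
   2 n / n^3 < 1 of bad graphs. *)

Lemma bin_leq_expn m k : 'C(m, k) <= m ^ k.
Proof.
apply: leq_trans (leq_pmulr _ (fact_gt0 k)) _.
rewrite bin_ffact ffact_prod.
apply: leq_trans (leq_prod (E2 := fun=> m) _) _; first by move=> i _; apply: leq_subr.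
by rewrite prod_nat_const card_ord.
Qed.

Lemma card_bigcup_le (T : finType) (I : Type) (r : seq I) (P : pred I) (F : I -> {set T}) :
  #|\bigcup_(i <- r | P i) F i| <= \sum_(i <- r | P i) #|F i|.
Proof.
elim/big_ind2: _ => [|a A b B leA leB|//]; first by rewrite cards0.
exact: leq_trans (leq_of_leqif (leq_card_setU A B)) (leq_add leA leB).
Qed.

Lemma exists_subset_card (T : finType) (U : {set T}) k :
  k <= #|U| -> exists2 V : {set T}, V \subset U & #|V| = k.
Proof.
move=> kU; exists [set x in take k (enum U)].
  by apply/subsetP => x; rewrite inE => /mem_take; rewrite mem_enum.
by rewrite cardsE (card_uniqP _) ?take_uniq ?enum_uniq // size_takel -?cardE.
Qed.

Section Degrees.
Variable T : finType.
Implicit Types (g : rel T) (U V : {set T}) (v : T).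

Definition deg g U v : nat := #|[set w in U | g v w]|.

Lemma deg_subset g U V v : U \subset V -> deg g U v <= deg g V v.
Proof.
move=> /subsetP UV; apply: subset_leq_card; apply/subsetP => w.
by rewrite !inE => /andP[/UV -> ->].
Qed.

Definition maxdeg_ge g U d := [exists v in U, d <= deg g U v].

Definition dense_levels g (s : nat -> nat) : Prop :=
  forall j U, s j.+1 <= #|U| -> maxdeg_ge g U (s j).

Lemma dense_levels_clique g s : irreflexive g -> symmetric g -> 0 < s 0 ->
  dense_levels g s -> forall k U, s k <= #|U| ->
  exists2 C : {set T}, C \subset U & is_clique g C /\ #|C| = k.+1.
Proof.
move=> girr gsym s0 gdense; elim=> [|k IHk] U sU.
  have /card_gt0P[x Ux] : 0 < #|U| by apply: leq_trans s0 sU.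
  exists [set x]; first by rewrite sub1set.
  split; last by rewrite cards1.
  by move=> a b; rewrite !inE => /eqP-> /eqP->; rewrite eqxx.
have /exists_inP[v Uv sv] := gdense _ _ sU.
have [C CN [Ccl Ccard]] := IHk _ sv.
have /subsetP CU : C \subset U.
  by apply: subset_trans CN _; apply/subsetP => w; rewrite inE => /andP[].
have gvC w : w \in C -> g v w by move/(subsetP CN); rewrite inE => /andP[].
have vC : v \notin C by apply/negP => /gvC; rewrite girr.
exists (v |: C); last split.
- by rewrite subUset sub1set Uv; apply/subsetP.
- move=> a b; rewrite !inE => /predU1P[->|Ca] /predU1P[->|Cb]; rewrite ?eqxx //.
  + by move=> _; apply: gvC.
  + by move=> _; rewrite gsym; apply: gvC.
  + exact: Ccl.
- by rewrite cardsU1 vC Ccard.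
Qed.

Lemma dense_levels_of_card g s : (forall j, j < s j) ->
  (forall j U, j < #|T| -> #|U| = s j.+1 -> maxdeg_ge g U (s j)) ->
  dense_levels g s.
Proof.
move=> s_gt g_dense j U sU.
have [V VU Vs] := exists_subset_card sU.
have jT : j < #|T| by have := max_card U; have := s_gt j.+1; lia.
have /exists_inP[v Vv sv] := g_dense j V jT Vs.
apply/exists_inP; exists v; first exact: (subsetP VU).
exact: leq_trans sv (deg_subset _ _ VU).
Qed.

End Degrees.

Section OrderedPairs.
Variable n : nat.
Implicit Types (g : rel 'I_n) (U : {set 'I_n}).

Definition upairs U : {set 'I_n * 'I_n} :=
  [set p | [&& p.1 \in U, p.2 \in U & p.1 < p.2]].

Lemma sum_deg g U : irreflexive g -> symmetric g ->
  \sum_(v in U) deg g U v = 2 * #|[set p in upairs U | g p.1 p.2]|.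
Proof.
move=> girr gsym.
have g_split v w : g v w = (v < w) && g v w + (w < v) && g v w :> nat.
  case gvw: (g v w); rewrite ?andbF //=.
  have : v != w by apply: contraTneq gvw => ->; rewrite girr.
  by rewrite neq_ltn; case: ltngtP.
have -> : \sum_(v in U) deg g U v =
    \sum_(v in U) \sum_(w in U) ((v < w) && g v w + (w < v) && g v w).
  apply: eq_bigr => v _; rewrite /deg -sum1dep_card big_mkcond /= [RHS]big_mkcond.
  by apply: eq_bigr => w _; rewrite -g_split; case: (w \in U); case: (g v w).
rewrite (eq_bigr _ (fun v _ => big_split _ _ _ _ _)) big_split /=.
rewrite [X in _ + X]exchange_big /=.
under [X in _ + X]eq_bigr do under eq_bigr do rewrite gsym.
rewrite addnn -mul2n; congr (2 * _).
rewrite pair_big /= -sum1_card big_mkcond [RHS]big_mkcond /=.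
apply: eq_bigr => -[v w] _ /=.
rewrite !inE /=.
by case: (v \in U); case: (w \in U); case: (g v w); rewrite /= ?andbT ?andbF.
Qed.

Lemma card_upairs U : 2 * #|upairs U| = #|U| * (#|U| - 1).
Proof.
have neq_irr : irreflexive (fun x y : 'I_n => x != y) by move=> x; rewrite eqxx.
have neq_sym : symmetric (fun x y : 'I_n => x != y) by move=> x y; rewrite eq_sym.
have := sum_deg U neq_irr neq_sym.
have -> : [set p in upairs U | p.1 != p.2] = upairs U.
  apply/setP => -[v w]; rewrite !inE /=.
  case: (ltnP v w) => [vw|_]; rewrite ?andbF ?andbT //.
  suff -> : v != w by rewrite andbT.
  by apply: contraTneq vw => ->; rewrite ltnn.
move=> <-; rewrite -sum_nat_const; apply: eq_bigr => v Uv.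
rewrite /deg (cardsD1 v U) Uv add1n subSS subn0; apply: eq_card => w.
by rewrite !inE eq_sym andbC.
Qed.

End OrderedPairs.

Section ExpLnInequalities.
Variable R : realType.
Local Open Scope ring_scope.
Implicit Types e : R.

Lemma invf_1Bsqr_le_expR e : 0 <= e -> e <= 1/2 -> (1 - e ^+ 2)^-1 <= expR (2 * e ^+ 2).
Proof.
move=> e0 e1; rewrite -div1r ler_pdivrMr; last by nra.
have := expR_ge1Dx (2 * e ^+ 2).
have : 0 <= e ^+ 2 * (1 - 2 * e ^+ 2) by apply: mulr_ge0; nra.
nra.
Qed.

Lemma invf_1D_le_expR e : 0 <= e -> e <= 1/2 -> (1 + e)^-1 <= expR (e ^+ 2 - e).
Proof.
move=> e0 e1; rewrite -div1r ler_pdivrMr; last by lra.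
have := expR_ge1Dx (e ^+ 2 - e).
have : 0 <= e ^+ 3 by apply: exprn_ge0.
nra.
Qed.

Lemma lower_tail_weight_le (m D : nat) e : 0 <= e -> e <= 1/2 ->
  let l := (1 - e) / (1 + e) in
  ((1 + l) / 2) ^+ (m + m + D) / l ^+ m <=
    expR ((m + m + D)%:R * e ^+ 2 - D%:R * e).
Proof.
move=> e0 e1 /=; set l := (1 - e) / (1 + e).
have ne1D : 1 + e != 0 by lra.
have ne1B : 1 - e != 0 by lra.
have ne1Bsqr : 1 - e ^+ 2 != 0 by nra.
have -> : ((1 + l) / 2) ^+ (m + m + D) / l ^+ m =
    ((1 - e ^+ 2)^-1) ^+ m * ((1 + e)^-1) ^+ D.
  have -> : (1 + l) / 2 = (1 + e)^-1 by rewrite /l; field.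
  have -> : (1 - e ^+ 2)^-1 = (1 + e)^-1 * (1 + e)^-1 / l.
    by rewrite /l; field; rewrite ne1D ne1B ne1Bsqr.
  by rewrite -exprVn !exprD !exprMn exprVn; ring.
have -> : (m + m + D)%:R * e ^+ 2 - D%:R * e = m%:R * (2 * e ^+ 2) + D%:R * (e ^+ 2 - e).
  by rewrite !natrD; ring.
rewrite expRD (expRM_natl m) (expRM_natl D).
have ge0_inv x : 0 < x -> 0 <= x^-1 by move=> x0; rewrite invr_ge0 ltW.
apply: ler_pM; rewrite ?exprn_ge0 ?ge0_inv //; try nra.
- by apply: lerXn2r; rewrite ?nnegrE ?ge0_inv ?expR_ge0 ?invf_1Bsqr_le_expR //; nra.
- by apply: lerXn2r; rewrite ?nnegrE ?ge0_inv ?expR_ge0 ?invf_1D_le_expR //; nra.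
Qed.

Lemma lower_tail_exponent_le (u N D E L : R) :
  2 <= u -> 0 <= L -> 0 <= E -> 2 * N = u * (u - 1) -> u * E <= 2 * D ->
  16 * u * L <= E ^+ 2 -> 2 * u * L <= D ^+ 2 / (4 * N).
Proof.
move=> u2 L0 E0 Nu uE E2.
rewrite ler_pdivlMr; last by nra.
have : (u * E) ^+ 2 <= (2 * D) ^+ 2 by apply: lerXn2r; rewrite ?nnegrE; nra.
have : u ^+ 2 * (16 * u * L) <= u ^+ 2 * E ^+ 2 by apply: ler_wpM2l; nra.
have : 0 <= u ^+ 2 * L by nra.
nra.
Qed.

Lemma ln2_le1 : ln (2 : R) <= 1.
Proof. by have := @le_ln1Dx R 1; rewrite (_ : 1 + 1 = 2) //; apply; lra. Qed.

Lemma ln_nat_ge_half k : (1 < k)%N -> 1 / 2 <= ln (k%:R : R).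
Proof.
move=> k_gt1; apply: le_trans (_ : ln 2 <= _); last first.
  by rewrite ler_ln ?posrE ?ltr0n ?ler_nat //; lia.
have := @le_ln1Dx R (- (1 / 2)); rewrite (_ : 1 + - (1 / 2) = 2^-1); last lra.
by rewrite lnV ?posrE //; lra.
Qed.

End ExpLnInequalities.

Section LowerTailCount.
Variables (R : realType) (aT : finType).
Local Open Scope ring_scope.
Implicit Types (P : {set aT}) (l : R).

Definition ones (f : {ffun aT -> bool}) P : nat := #|[set p in P | f p]|.

Lemma sum_expr_ones P l :
  \sum_(f : {ffun aT -> bool}) l ^+ ones f P =
    2 ^+ #|~: P| * (1 + l) ^+ #|P|.
Proof.
have expr_prod f : l ^+ ones f P =
    \prod_(p : aT) (if (p \in P) && f p then l else 1).
  by rewrite -prodr_const big_mkcond /=; apply: eq_bigr => p _; rewrite inE.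
under eq_bigr do rewrite expr_prod.
rewrite -(bigA_distr_bigA (fun p (b : bool) => if (p \in P) && b then l else 1)) /=.
under eq_bigr do rewrite big_bool /= andbF.
rewrite (bigID (mem P)) /= mulrC -!prodr_const; congr (_ * _).
  by apply: eq_big => [p|p /negbTE ->]; rewrite ?inE.
by apply: eq_bigr => p ->; rewrite addrC.
Qed.

Lemma card_few_ones_le P (m : nat) l : 0 < l -> l <= 1 ->
  #|[set f | (ones f P <= m)%N]|%:R <=
    2 ^+ #|~: P| * (1 + l) ^+ #|P| / l ^+ m.
Proof.
move=> l0 l1; rewrite -sum_expr_ones mulr_suml -sum1_card natr_sum.
rewrite [leRHS](bigID (mem [set f | (ones f P <= m)%N])) /=.
apply: ler_wpDr; first by apply: sumr_ge0 => f _; rewrite divr_ge0 ?exprn_ge0 ?ltW.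
apply: ler_sum => f; rewrite inE => few.
by rewrite ler_pdivlMr ?exprn_gt0 // mul1r ler_wiXn2l // ltW.
Qed.

(* Chernoff's bound: weight each [f] by [l ^+ ones f P], where
   [l = (1 - e) / (1 + e)], [e = D / (2 N)], [N = #|P|] and [D = N - 2 m]. *)
Lemma card_few_ones_expR P (m : nat) : (m + m <= #|P|)%N ->
  #|[set f | (ones f P <= m)%N]|%:R <=
    2 ^+ #|aT| * expR (- ((#|P| - (m + m))%N%:R ^+ 2 / (4 * #|P|%:R)) : R).
Proof.
move=> mP; set N := #|P|; set D := (N - (m + m))%N.
have ND : N = (m + m + D)%N by rewrite /D; lia.
have [N0|N_gt0] := posnP N.
  rewrite N0 mulr0 invr0 mulr0 oppr0 expR0 mulr1 -natrX ler_nat.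
  by rewrite -[2%N]card_bool -card_ffun max_card.
set e : R := D%:R / (2 * N%:R).
have N_neq0 : N%:R != 0 :> R by rewrite pnatr_eq0 -lt0n.
have e0 : 0 <= e by rewrite divr_ge0 ?mulr_ge0 ?ler0n.
have e1 : e <= 1 / 2.
  rewrite ler_pdivrMr ?mulr_gt0 ?ltr0n //.
  have : (D%:R : R) <= N%:R by rewrite ler_nat; lia.
  lra.
set l := (1 - e) / (1 + e).
have l0 : 0 < l by rewrite divr_gt0 //; lra.
have l1 : l <= 1 by rewrite ler_pdivrMr; lra.
apply: le_trans (card_few_ones_le P m l0 l1) _.
have -> : 2 ^+ #|~: P| * (1 + l) ^+ N / l ^+ m =
    2 ^+ #|aT| * (((1 + l) / 2) ^+ (m + m + D) / l ^+ m).
  have -> : (1 + l) ^+ N = 2 ^+ N * ((1 + l) / 2) ^+ N.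
    by rewrite expr_div_n mulrC divfK // expf_neq0 // pnatr_eq0.
  by rewrite -(cardsC P) -/N exprD -ND; ring.
rewrite ler_wpM2l ?exprn_ge0 //; apply: le_trans (lower_tail_weight_le m D e0 e1) _.
rewrite ler_expR -ND.
suff -> : N%:R * e ^+ 2 - D%:R * e = - (D%:R ^+ 2 / (4 * N%:R)) by [].
by rewrite /e; field.
Qed.

End LowerTailCount.

Section EdgeCodes.
Variable n : nat.
Implicit Type U : {set 'I_n}.

Definition edge_code := {ffun 'I_n * 'I_n -> bool}.

(* Only the values of [f] on pairs [(x, y)] with [x < y] matter. *)
Definition graph_of (f : edge_code) : rel 'I_n :=
  fun x y => (x != y) && f (if x < y then (x, y) else (y, x)).

Definition edge_codeC (f : edge_code) : edge_code := [ffun p => ~~ f p].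

Lemma graph_of_irr f : irreflexive (graph_of f).
Proof. by move=> x; rewrite /graph_of eqxx. Qed.

Lemma graph_of_sym f : symmetric (graph_of f).
Proof.
move=> x y; rewrite /graph_of; case: (eqVneq x y) => [->//|/= xy].
by case: (ltngtP x y) => // /val_inj eq_xy; rewrite eq_xy eqxx in xy.
Qed.

Lemma graph_of_simple f : simple_graph (graph_of f).
Proof. by split; [apply: graph_of_irr | apply: graph_of_sym]. Qed.

Lemma graph_of_codeC f x y : graph_of (edge_codeC f) x y = (x != y) && ~~ graph_of f x y.
Proof. by rewrite /graph_of ffunE; case: (x != y). Qed.

Lemma edge_codeCK : involutive edge_codeC.
Proof. by move=> f; apply/ffunP => p; rewrite !ffunE negbK. Qed.

Lemma upairs_graph_of f U :
  [set p in upairs U | graph_of f p.1 p.2] = [set p in upairs U | f p].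
Proof.
apply/setP => -[v w]; rewrite !inE /= /graph_of.
case: (ltnP v w) => [vw|_]; rewrite ?andbF //= !andbT.
by rewrite (_ : v != w) // neq_ltn vw.
Qed.

Lemma clique_codeC_independent f (I : {set 'I_n}) :
  is_clique (graph_of (edge_codeC f)) I -> is_independent (graph_of f) I.
Proof.
move=> Icl x y xI yI; case: (eqVneq x y) => [->|xy]; first by rewrite graph_of_irr.
by have := Icl x y xI yI xy; rewrite graph_of_codeC xy.
Qed.

Definition maxdeg_lt_codes U d : {set edge_code} :=
  [set f | ~~ maxdeg_ge (graph_of f) U d].

Lemma card_edges_maxdeg_lt f U d : ~~ maxdeg_ge (graph_of f) U d ->
  2 * #|[set p in upairs U | f p]| <= #|U| * (d - 1).
Proof.
rewrite negb_exists_in => /forall_inP small_deg.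
rewrite -upairs_graph_of -(sum_deg _ (graph_of_irr f) (graph_of_sym f)).
rewrite -sum_nat_const; apply: leq_sum => v /small_deg; lia.
Qed.

Section NoHighDegree.
Variable R : realType.
Local Open Scope ring_scope.

Lemma card_maxdeg_lt_codes_le U (d : nat) (L : R) :
  (1 <= d)%N -> (2 * d <= #|U|)%N -> 0 <= L ->
  16 * #|U|%:R * L <= ((#|U| + 1 - 2 * d)%N%:R) ^+ 2 ->
  #|maxdeg_lt_codes U d|%:R <=
    2 ^+ #|{: 'I_n * 'I_n}| * expR (- (2 * #|U|%:R * L)).
Proof.
move=> d1 dU L0 HE; set u := #|U|; set N := #|upairs U|.
have Nu := card_upairs U; rewrite -/u -/N in Nu.
set m := (u * (d - 1) %/ 2)%N.
have mN : (m + m <= N)%N.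
  have : (2 * (u * (d - 1)) <= u * (u - 1))%N by rewrite mulnCA leq_mul //; lia.
  rewrite /m; lia.
apply: (le_trans (y := #|[set f | (ones f (upairs U) <= m)%N]|%:R)).
  rewrite ler_nat; apply: subset_leq_card; apply/subsetP => f; rewrite !inE.
  by move=> /card_edges_maxdeg_lt; rewrite /ones /m leq_divRL // mulnC.
apply: le_trans (card_few_ones_expR _ mN) _.
rewrite ler_wpM2l ?exprn_ge0 // ler_expR lerN2.
apply: (lower_tail_exponent_le (E := (u + 1 - 2 * d)%N%:R)) => //.
- by rewrite (ler_nat R 2 u); lia.
- have := congr1 (fun k : nat => k%:R : R) Nu; rewrite /= !natrM natrB //; lia.
- have m2 : (m + m <= u * (d - 1))%N by rewrite /m; lia.
  have : (u * (u + 1 - 2 * d) + 2 * (u * (d - 1)) = u * (u - 1))%N.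
    by rewrite mulnCA -mulnDr; congr (_ * _); lia.
  by rewrite -!natrM ler_nat; lia.
Qed.

End NoHighDegree.
End EdgeCodes.

Section Levels.
Variables (R : realType) (L : R).
Local Open Scope ring_scope.
Hypothesis L_ge : 1 / 2 <= L.

Let L_gt0 : 0 < L. Proof. by have := L_ge; lra. Qed.
Let L_ge0 : 0 <= L. Proof. exact: ltW. Qed.

(* [level_bound j.+1 - 2 * level_bound j = 64 * (3/2) ^+ j.+1 * L]: this gap
   grows fast enough for its square to dominate [16 * level_bound j.+1 * L]. *)
Definition level_bound (j : nat) : R := (256 * 2 ^+ j - 192 * (3 / 2) ^+ j) * L.

Definition level (j : nat) : nat := Num.truncn (level_bound j).

Lemma level_bound_ge j : 64 * 2 ^+ j * L <= level_bound j.
Proof.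
have : (3 / 2 : R) ^+ j <= 2 ^+ j by apply: lerXn2r; rewrite ?nnegrE; lra.
rewrite -subr_ge0 => le_pow.
have : 0 <= (2 ^+ j - (3 / 2) ^+ j) * L by rewrite mulr_ge0.
rewrite /level_bound; lra.
Qed.

Lemma level_le_bound j : (level j)%:R <= level_bound j.
Proof.
rewrite truncn_le; apply: le_trans _ (level_bound_ge j).
by rewrite !mulr_ge0 ?exprn_ge0.
Qed.

Lemma level_le j : (level j)%:R <= 256 * 2 ^+ j * L.
Proof.
apply: le_trans (level_le_bound j) _.
have : 0 <= (3 / 2 : R) ^+ j * L by rewrite mulr_ge0 // exprn_ge0 // divr_ge0.
rewrite /level_bound; lra.
Qed.

Lemma level_ge j : (32 * 2 ^ j <= level j)%N.
Proof.
have ge := level_bound_ge j; have pow_ge0 : (0 : R) <= 2 ^+ j by rewrite exprn_ge0.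
have lb_ge0 : 0 <= level_bound j by apply: le_trans _ ge; rewrite !mulr_ge0.
by have := L_ge; rewrite truncn_ge_nat // natrM natrX; nra.
Qed.

Lemma level_step j :
  [/\ (1 <= level j)%N, (2 * level j <= level j.+1)%N &
   16 * (level j.+1)%:R * L <= ((level j.+1 + 1 - 2 * level j)%N%:R) ^+ 2].
Proof.
set gap : R := 64 * (3 / 2) ^+ j.+1 * L.
have gap_gt0 : 0 < gap by rewrite !mulr_gt0 // exprn_gt0 // divr_gt0.
have gap_lt : gap < (level j.+1)%:R + 1 - 2 * (level j)%:R.
  have lvl_gt : level_bound j.+1 < (level j.+1)%:R + 1 by rewrite natr1 truncnS_gt.
  have := level_le_bound j.
  have -> : gap = level_bound j.+1 - 2 * level_bound j.
    by rewrite /gap /level_bound !exprS; field.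
  lra.
have lvl2 : (2 * level j <= level j.+1)%N.
  suff : (2 * level j < (level j.+1).+1)%N by [].
  by rewrite -(ltr_nat R) natrM -natr1; lra.
split => //; first by apply: leq_trans (level_ge j); rewrite muln_gt0 expn_gt0.
rewrite natrB ?natrD ?natrM; last by lia.
apply: le_trans (_ : gap ^+ 2 <= _); last first.
  by apply: lerXn2r; rewrite ?nnegrE ?ltW //; lra.
have pow_sq : (2 : R) ^+ j.+1 <= ((3 / 2) ^+ j.+1) ^+ 2.
  by rewrite exprAC; apply: lerXn2r; rewrite ?nnegrE //; lra.
have lvl_le : 16 * (level j.+1)%:R * L <= 16 * (256 * 2 ^+ j.+1 * L) * L.
  by rewrite ler_wpM2r // ler_wpM2l // level_le.
have lvl_sq : 4096 * 2 ^+ j.+1 * L ^+ 2 <= 4096 * ((3 / 2) ^+ j.+1) ^+ 2 * L ^+ 2.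
  by rewrite ler_wpM2r ?exprn_ge0 // ler_wpM2l.
suff -> : gap ^+ 2 = 4096 * ((3 / 2) ^+ j.+1) ^+ 2 * L ^+ 2 by nra.
by rewrite /gap; ring.
Qed.

End Levels.

Section GoodCodes.
Variables (R : realType) (n : nat).
Hypothesis n_gt1 : (1 < n)%N.
Local Open Scope ring_scope.
Implicit Types (U : {set 'I_n}) (f : edge_code n).

Let L : R := ln n%:R.
Let s := level L.
Let L_ge : 1 / 2 <= L. Proof. exact: ln_nat_ge_half. Qed.
Let L_ge0 : 0 <= L. Proof. by have := L_ge; lra. Qed.

Definition bad_codes_at j U : {set edge_code n} :=
  maxdeg_lt_codes U (s j) :|: @edge_codeC n @^-1: maxdeg_lt_codes U (s j).

Definition bad_codes : {set edge_code n} :=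
  \bigcup_(j < n) \bigcup_(U : {set 'I_n} | #|U| == s j.+1) bad_codes_at j U.

Lemma good_code_dense f : f \notin bad_codes ->
  dense_levels (graph_of f) s /\ dense_levels (graph_of (edge_codeC f)) s.
Proof.
have s_gt j : (j < s j)%N.
  by have := level_ge L_ge j; have := ltn_expl j (ltnSn 1); rewrite /s; lia.
move=> f_good; have bad_at j U : (j < n)%N -> #|U| = s j.+1 ->
    f \in bad_codes_at j U -> f \in bad_codes.
  move=> jn sU f_bad; apply/bigcupP; exists (Ordinal jn) => //.
  by apply/bigcupP; exists U; rewrite ?sU.
split; apply: dense_levels_of_card => // j U; rewrite card_ord => jn sU;
  apply: contraNT f_good => not_dense; apply: (bad_at j U jn sU);
  by rewrite /bad_codes_at !inE ?not_dense ?orbT.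
Qed.

Let c : R := 2 ^+ #|{: 'I_n * 'I_n}|.

Lemma card_bad_codes_at_le j U : #|U| = s j.+1 ->
  #|bad_codes_at j U|%:R <= 2 * c / (n%:R ^+ s j.+1) ^+ 2.
Proof.
move=> Us; have [s1 s2 s3] := level_step L_ge j.
have expR_L : expR (- (2 * (s j.+1)%:R * L)) = ((n%:R ^+ s j.+1) ^+ 2)^-1.
  rewrite (_ : 2 * _ * L = (s j.+1 * 2)%:R * L); last by rewrite natrM; ring.
  by rewrite expRN expRM_natl /L lnK ?posrE ?ltr0n 1?ltnW // exprM.
have := card_maxdeg_lt_codes_le (U := U) (d := s j) (L := L) s1.
rewrite Us expR_L => /(_ s2 L_ge0 s3) bound.
apply: le_trans (_ : (2 * #|maxdeg_lt_codes U (s j)|)%N%:R <= _).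
  rewrite ler_nat mul2n -addnn.
  rewrite -{2}(card_preimset (maxdeg_lt_codes U (s j)) (can_inj (@edge_codeCK n))).
  exact: leq_card_setU.
by rewrite natrM -mulrA ler_wpM2l.
Qed.

Lemma card_bad_level_le j :
  (\sum_(U : {set 'I_n} | #|U| == s j.+1) #|bad_codes_at j U|)%:R <= 2 * c / n%:R ^+ 3.
Proof.
set u := s j.+1.
have n_gt0 : (0 : R) < n%:R by rewrite ltr0n ltnW.
have u3 : (3 <= u)%N.
  by have := level_ge L_ge j.+1; have := expn_gt0 2 j.+1; rewrite /u /s; lia.
rewrite natr_sum; apply: le_trans (_ : \sum_(U : {set 'I_n} | #|U| == u)
    2 * c / (n%:R ^+ u) ^+ 2 <= _).
  by apply: ler_sum => U /eqP; apply: card_bad_codes_at_le.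
rewrite sumr_const -cardsE card_draws card_ord.
apply: le_trans (_ : (2 * c / (n%:R ^+ u) ^+ 2) *+ (n ^ u) <= _).
  by apply: ler_wpMn2l; rewrite ?divr_ge0 ?mulr_ge0 ?exprn_ge0 ?ltW ?bin_leq_expn.
rewrite -mulr_natr natrX expr2 invfM mulrA -mulrA mulVf ?expf_neq0 ?lt0r_neq0 // mulr1.
rewrite ler_pdivlMr ?exprn_gt0 // mulrAC ler_pdivrMr ?exprn_gt0 //.
by rewrite ler_wpM2l ?mulr_ge0 ?exprn_ge0 // ler_weXn2l // ler1n ltnW.
Qed.

Lemma card_bad_codes_lt : (#|bad_codes| < #|{: edge_code n}|)%N.
Proof.
rewrite -(ltr_nat R) card_ffun card_bool natrX -/c.
apply: le_lt_trans (_ : _ <= \sum_(j < n) 2 * c / n%:R ^+ 3) _.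
  apply: le_trans _ (ler_sum _ (fun (j : 'I_n) _ => card_bad_level_le j)).
  rewrite -natr_sum ler_nat /bad_codes; apply: leq_trans (card_bigcup_le _ _ _) _.
  by apply: leq_sum => j _; apply: card_bigcup_le.
have n_cube : (2 * n%:R : R) < n%:R ^+ 3.
  by rewrite -natrX -natrM ltr_nat !expnS expn0; nia.
have c_gt0 : 0 < c by rewrite exprn_gt0.
rewrite sumr_const card_ord -[_ *+ n]mulr_natr mulrAC.
by rewrite ltr_pdivrMr ?exprn_gt0 ?ltr0n 1?ltnW //; nra.
Qed.

Lemma exists_good_code : exists f, f \notin bad_codes.
Proof.
have : ~~ ([set: edge_code n] \subset bad_codes).
  by apply: contraTN card_bad_codes_lt => /subset_leq_card; rewrite cardsT leqNgt.
by case/subsetPn => f _ f_good; exists f.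
Qed.

Lemma good_code_ramsey f (A : {set 'I_n}) t : f \notin bad_codes -> (s t <= #|A|)%N ->
  (exists2 C : {set 'I_n}, C \subset A & is_clique (graph_of f) C /\ #|C| = t.+1) /\
  (exists2 I : {set 'I_n}, I \subset A & is_independent (graph_of f) I /\ #|I| = t.+1).
Proof.
move=> /good_code_dense[dense_f dense_fC] sA; have [s0 _ _] := level_step L_ge 0.
split; first by have := dense_levels_clique (graph_of_irr f) (graph_of_sym f) s0 dense_f sA.
have [I IA [Icl Icard]] :=
  dense_levels_clique (graph_of_irr _) (graph_of_sym _) s0 dense_fC sA.
by exists I => //; split => //; apply: clique_codeC_independent.
Qed.

Lemma level_truncn_le (r : R) : 0 < r ->
  (s (Num.truncn r))%:R <= powR 2 (r + 8) * log2 (n%:R : R).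
Proof.
move=> r_gt0; apply: le_trans (level_le L_ge _) _; set t := Num.truncn r.
have tr : t%:R <= r by rewrite truncn_le ltW.
have ln2_gt0 : 0 < ln (2 : R) by rewrite ln_gt0 // ltr1n.
apply: ler_pM; rewrite ?mulr_ge0 ?exprn_ge0 //.
  rewrite (_ : 256 * 2 ^+ t = powR 2 (t + 8)%:R); last first.
    by rewrite powR_mulrn ?ler0n // exprD [RHS]mulrC -[2 ^+ 8]natrX.
  by apply: ler_powR; rewrite ?ler1n // natrD; lra.
rewrite /log2 ler_pdivlMr // -[X in _ <= X]mulr1 ler_wpM2l //; exact: ln2_le1.
Qed.

End GoodCodes.

Unset Implicit Arguments.
Local Open Scope ring_scope.

Theorem proposition2p1 (R : realType) (n : nat) (hn : (0 < n)%N) :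
  exists e : rel 'I_n, simple_graph e /\
    forall r : R, 0 < r ->
      let m := powR 2 (r + 8) * log2 (n%:R : R) in
      0 < m -> locally_ramsey e m r.
Proof.
have [n_le1|n_gt1] := leqP n 1.
  exists (fun _ _ => false); split => // r _ /=.
  by rewrite (_ : n = 1%N) /log2 ?ln1 ?mul0r ?mulr0 ?ltxx //; lia.
have [f f_good] := exists_good_code R n_gt1.
exists (graph_of f); split; first exact: graph_of_simple.
move=> r r_gt0 m _ A Am.
have := le_trans (level_truncn_le n_gt1 r_gt0) Am; rewrite ler_nat => sA.
have r_le : r <= (Num.truncn r).+1%:R by apply/ltW/truncnS_gt.
have [[C CA [Ccl Ccard]] [I IA [Iind Icard]]] := good_code_ramsey n_gt1 f_good sA.
by split; [exists C | exists I]; rewrite ?Ccard ?Icard.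
Qed.
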